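(* There exists a $GDD(3,K_4^{(3)}+e,gn)$ of type $g^n$ for each $(g,n)\in\{(5,4),(5,6),(10,5)\}$.
   Context: $K_4^{(3)}+e$ denotes the 3-uniform hypergraph with vertex set $\{1,2,3,4,5\}$ and edge set $\{\{1,2,3\},\{1,2,4\},\{1,3,4\},\{2,3,4\},\{3,4,5\}\}$. A $GDD(3,K_4^{(3)}+e,gn)$ of type $g^n$ is a triple $(X,\mathcal{G},\mathcal{B})$ where $|X|=gn$, $\mathcal{G}$ is a partition of $X$ into $n$ groups of size $g$, and $\mathcal{B}$ is a collection of hypergraphs on subsets of $X$ (blocks), each isomorphic to $K_4^{(3)}+e$, such that each edge of each block meets each group in at most one point, and each 3-subset of $X$ with points in three distinct groups is an edge of exactly one block. *)

From mathcomp Require Import all_boot.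
Set Implicit Arguments. Unset Strict Implicit. Unset Printing Implicit Defensive.

(* Vertices 1..5 of K_4^(3)+e are encoded as 0..4 in 'I_5. *)
Definition v (k : nat) : 'I_5 := inord k.

Definition K4e_edges : {set {set 'I_5}} :=
  [set [set v 0; v 1; v 2]; [set v 0; v 1; v 3]; [set v 0; v 2; v 3];
       [set v 1; v 2; v 3]; [set v 2; v 3; v 4]].

Definition hypergraph (X : finType) := ({set X} * {set {set X}})%type.

Definition iso_K4e (X : finType) (H : hypergraph X) : Prop :=
  exists f : 'I_5 -> X,
    [/\ injective f, H.1 = f @: setT & H.2 = [set f @: e | e : {set 'I_5} in K4e_edges]].

Definition transversal_to (X : finType) (G : {set {set X}}) (T : {set X}) : bool :=
  [forall A in G, #|T :&: A| <= 1].

Definition is_GDD_K4e (g n : nat) (X : finType) (G : {set {set X}})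
    (B : seq (hypergraph X)) : Prop :=
  [/\ #|X| = g * n,
      partition G [set: X],
      #|G| = n
    & (forall A, A \in G -> #|A| = g)] /\
  [/\ (forall H, H \in B -> iso_K4e H),
      (forall H e, H \in B -> e \in H.2 -> transversal_to G e)
    & (forall T : {set X}, #|T| = 3 -> transversal_to G T ->
         count (fun H : hypergraph X => T \in H.2) B = 1)].

Definition GDD_K4e_exists (g n : nat) : Prop :=
  exists (X : finType) (G : {set {set X}}) (B : seq (hypergraph X)),
    is_GDD_K4e g n G B.

From mathcomp Require Import all_boot zify.
Set Implicit Arguments. Unset Strict Implicit. Unset Printing Implicit Defensive.

(* The three designs are given explicitly on the grid 'I_n * 'I_g, whose
   groups are the fibres of the first projection.  Each is invariant under
   Z_m * Z_g, translating the group index modulo m (groups >= m are fixed)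
   and the position inside a group modulo g, so it is listed by orbit
   representatives.  That every transversal triple is an edge of exactly one
   block is then a finite computation: encode each 3-set as the sorted list of
   its points, and compare the sorted list of all block edges with the list
   of all transversal triples. *)

Section Grid.
Variables n g : nat.
Local Notation point := ('I_n * 'I_g)%type.

Definition grid_group (i : 'I_n) : {set point} := [set x | x.1 == i].
Definition grid_groups : {set {set point}} := [set grid_group i | i : 'I_n].

Lemma card_grid_group i : #|grid_group i| = g.
Proof.
have -> : grid_group i = setX [set i] setT by apply/setP=> -[x y]; rewrite !inE andbT.
by rewrite cardsX cards1 cardsT card_ord mul1n.
Qed.

Lemma transversal_gridP (T : {set point}) :
  reflect {in T &, forall x y, x.1 = y.1 -> x = y} (transversal_to grid_groups T).
Proof.
apply: (iffP forall_inP) => [tT x y xT yT e | tT _ /imsetP[i _ ->]].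
  have /tT /card_le1_eqP : grid_group x.1 \in grid_groups by apply: imset_f.
  by apply; rewrite !inE ?xT ?yT /= ?e eqxx.
apply/card_le1_eqP=> x y; rewrite !inE => /andP[xT /eqP ex] /andP[yT /eqP ey].
by apply: tT => //; rewrite ex ey.
Qed.

Lemma transversal_grid3 (a b c : point) :
  uniq [:: a.1; b.1; c.1] -> transversal_to grid_groups [set a; b; c].
Proof.
rewrite /= !inE negb_or andbT => /andP[/andP[ab ac] bc].
apply/transversal_gridP=> x y; rewrite !inE -!orbA.
by move=> /or3P[]/eqP-> /or3P[]/eqP-> // e; rewrite ?e ?eqxx in ab ac bc.
Qed.

Section Partition.
Hypothesis g_gt0 : 0 < g.

Lemma grid_group_inj : injective grid_group.
Proof.
move=> i j /setP /(_ (i, Ordinal g_gt0)); rewrite !inE eqxx.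
by move=> /esym/eqP.
Qed.

Lemma card_grid_groups : #|grid_groups| = n.
Proof. by rewrite card_imset ?card_ord //; apply: grid_group_inj. Qed.

Lemma partition_grid_groups : partition grid_groups [set: point].
Proof.
apply/and3P; split.
- apply/eqP/setP=> x; rewrite inE; apply/bigcupP; exists (grid_group x.1).
    exact: imset_f.
  by rewrite inE.
- apply/trivIsetP=> _ _ /imsetP[i _ ->] /imsetP[j _ ->] ne.
  rewrite -setI_eq0; apply/eqP/setP=> x; rewrite !inE.
  by apply/andP=> -[/eqP -> /eqP ij]; rewrite ij eqxx in ne.
- apply/imsetP=> -[i _ /setP /(_ (i, Ordinal g_gt0))].
  by rewrite !inE eqxx.
Qed.

End Partition.
End Grid.

Section K4eBlock.
Variables (X : finType) (f : 'I_5 -> X).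

Definition K4e_block : hypergraph X :=
  (f @: setT, [set f @: e | e : {set 'I_5} in K4e_edges]).

Lemma K4e_block_iso : injective f -> iso_K4e K4e_block.
Proof. by exists f. Qed.

Lemma K4e_block_edges : K4e_block.2 =
  [set [set f (v 0); f (v 1); f (v 2)]; [set f (v 0); f (v 1); f (v 3)];
       [set f (v 0); f (v 2); f (v 3)]; [set f (v 1); f (v 2); f (v 3)];
       [set f (v 2); f (v 3); f (v 4)]].
Proof. by rewrite /K4e_block /K4e_edges !(imsetU, imsetU1, imset_set1). Qed.

End K4eBlock.

Lemma K4e_block_transversal n g (f : 'I_5 -> 'I_n * 'I_g) e :
  uniq [:: (f (v 0)).1; (f (v 1)).1; (f (v 2)).1; (f (v 3)).1] ->
  uniq [:: (f (v 2)).1; (f (v 3)).1; (f (v 4)).1] ->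
  e \in (K4e_block f).2 -> transversal_to (grid_groups n g) e.
Proof.
rewrite [uniq (_ :: _)]/= !inE !negb_or !andbT.
move=> /and3P[/and3P[c01 c02 c03] /andP[c12 c13] c23] u234.
rewrite K4e_block_edges !inE -!orbA => /or4P[||| /orP[]] /eqP->; apply: transversal_grid3 => //.
all: by rewrite /= !inE !negb_or ?c01 ?c02 ?c03 ?c12 ?c13 ?c23.
Qed.

Definition pt := (nat * nat)%type.

Definition lexle (p q : pt) : bool := (p.1 < q.1) || ((p.1 == q.1) && (p.2 <= q.2)).

Lemma lexle_total : total lexle.
Proof. by move=> [a b] [c d]; rewrite /lexle /=; lia. Qed.

Lemma lexle_trans : transitive lexle.
Proof. by move=> [a b] [c d] [e f]; rewrite /lexle /=; lia. Qed.

Lemma lexle_anti : antisymmetric lexle.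
Proof. by move=> [a b] [c d]; rewrite /lexle /= => h; apply/eqP; rewrite xpair_eqE; lia. Qed.

(* Only a sort key: the proof uses that [sort] permutes, no property of this order. *)
Fixpoint lexle_seq (s t : seq pt) : bool :=
  match s, t with
  | [::], _ => true
  | _ :: _, [::] => false
  | x :: s', y :: t' => (lexle x y && (x != y)) || ((x == y) && lexle_seq s' t')
  end.

Section Encoding.
Variables n g : nat.
Local Notation point := ('I_n * 'I_g)%type.

Definition pt_of (x : point) : pt := (val x.1, val x.2).

Lemma pt_of_inj : injective pt_of.
Proof. by move=> [a b] [c d] [/val_inj -> /val_inj ->]. Qed.

Definition set_code (S : {set point}) : seq pt := sort lexle (map pt_of (enum S)).

Lemma mem_set_code S x : (pt_of x \in set_code S) = (x \in S).
Proof. by rewrite mem_sort (mem_map pt_of_inj) mem_enum. Qed.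

Lemma set_code_inj : injective set_code.
Proof. by move=> S1 S2 e; apply/setP=> x; rewrite -!mem_set_code e. Qed.

Lemma set_code3 a b c : uniq [:: a; b; c] ->
  set_code [set a; b; c] = sort lexle [:: pt_of a; pt_of b; pt_of c].
Proof.
move=> abc; apply/(perm_sortP lexle_total lexle_trans lexle_anti).
rewrite -[[:: pt_of a; _; _]]/(map pt_of [:: a; b; c]); apply: perm_map.
apply: uniq_perm; rewrite ?enum_uniq // => x.
by rewrite mem_enum !inE orbA.
Qed.

Definition grid_pts : seq pt := [seq (i, x) | i <- iota 0 n, x <- iota 0 g].

Definition transversal_codes : seq (seq pt) :=
  [seq t <- [seq p :: qr | p <- grid_pts, qr <- [seq [:: q; r] | q <- grid_pts, r <- grid_pts]]
   | sorted lexle t && uniq (map fst t)].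

Lemma grid_pts_uniq : uniq grid_pts.
Proof. by apply: allpairs_uniq; rewrite ?iota_uniq // => -[? ?] [? ?] _ _ [-> ->]. Qed.

Lemma transversal_codes_uniq : uniq transversal_codes.
Proof.
apply/filter_uniq/allpairs_uniq; rewrite ?grid_pts_uniq //.
  by apply: allpairs_uniq; rewrite ?grid_pts_uniq // => -[? ?] [? ?] _ _ [-> ->].
by move=> [? ?] [? ?] _ _ [-> ->].
Qed.

Lemma pt_of_grid_pts x : pt_of x \in grid_pts.
Proof. by apply: allpairs_f; rewrite mem_iota add0n ltn_ord. Qed.

Lemma set_code_transversal (T : {set point}) :
  #|T| = 3 -> transversal_to (grid_groups n g) T -> set_code T \in transversal_codes.
Proof.
move=> cardT /transversal_gridP trT; rewrite mem_filter (sort_sorted lexle_total) /=.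
apply/andP; split.
  rewrite /set_code (perm_uniq (perm_map fst (permEl (perm_sort _ _)))) -map_comp.
  by rewrite map_inj_in_uniq ?enum_uniq // => x y; rewrite !mem_enum => xT yT /val_inj; apply: trT.
have : size (set_code T) = 3 by rewrite size_sort size_map -cardE.
have : {subset set_code T <= grid_pts}.
  by move=> z; rewrite mem_sort => /mapP[x _ ->]; apply: pt_of_grid_pts.
case: (set_code T) => [|p [|q [|r []]]] // in_grid _.
by rewrite allpairs_f ?in_grid ?inE ?eqxx ?orbT // allpairs_f ?in_grid ?inE ?eqxx ?orbT.
Qed.

End Encoding.

Lemma count_mem_flatten (S : Type) (T : eqType) (F : S -> seq T) c (s : seq S) :
  uniq (flatten (map F s)) -> count (fun x => c \in F x) s = count_mem c (flatten (map F s)).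
Proof.
elim: s => //= x s IH; rewrite cat_uniq count_cat => /and3P[Fx_uniq _ rest_uniq].
by rewrite count_uniq_mem // IH.
Qed.

Section Certificate.
Variables n g : nat.
Hypotheses (n_gt0 : 0 < n) (g_gt0 : 0 < g).
Local Notation point := ('I_n * 'I_g)%type.

Definition point_of (p : pt) : point :=
  (Ordinal (ltn_pmod p.1 n_gt0), Ordinal (ltn_pmod p.2 g_gt0)).

Definition in_grid (p : pt) : bool := (p.1 < n) && (p.2 < g).

Lemma pt_of_point_of p : in_grid p -> pt_of (point_of p) = p.
Proof. by case: p => a x /andP[an xg]; rewrite /pt_of /= !modn_small. Qed.

Definition block_vertex (b : seq pt) (i : 'I_5) : point := point_of (nth (0, 0) b i).

Definition block_of (b : seq pt) : hypergraph point := K4e_block (block_vertex b).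

Definition block_edge_codes (b : seq pt) : seq (seq pt) :=
  let p := nth (0, 0) b in
  [:: sort lexle [:: p 0; p 1; p 2]; sort lexle [:: p 0; p 1; p 3];
      sort lexle [:: p 0; p 2; p 3]; sort lexle [:: p 1; p 2; p 3];
      sort lexle [:: p 2; p 3; p 4]].

Definition block_ok (b : seq pt) : bool :=
  if b is [:: p0; p1; p2; p3; p4] then
    [&& all in_grid b, uniq b, uniq [:: p0.1; p1.1; p2.1; p3.1] & uniq [:: p2.1; p3.1; p4.1]]
  else false.

Section Block.
Variable b : seq pt.
Hypothesis b_ok : block_ok b.

Lemma block_in_grid p : p \in b -> in_grid p.
Proof.
by case: b b_ok => [|p0 [|p1 [|p2 [|p3 [|p4 []]]]]] // /and4P[/allP b_grid _ _ _] /b_grid.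
Qed.

Lemma pt_of_block_vertex (i : 'I_5) : pt_of (block_vertex b i) = nth (0, 0) b i.
Proof.
rewrite pt_of_point_of // block_in_grid // mem_nth //.
by case: b b_ok => [|p0 [|p1 [|p2 [|p3 [|p4 []]]]]].
Qed.

Lemma block_vertex_inj : injective (block_vertex b).
Proof.
move=> i j /(congr1 (@pt_of n g)); rewrite !pt_of_block_vertex => /eqP.
case: b b_ok => [|p0 [|p1 [|p2 [|p3 [|p4 []]]]]] // /and4P[_ b_uniq _ _].
by rewrite nth_uniq // => /eqP /val_inj.
Qed.

Lemma set_code_block_edge k l m : uniq [:: k; l; m] -> all (gtn 5) [:: k; l; m] ->
  set_code [set block_vertex b (v k); block_vertex b (v l); block_vertex b (v m)] =
  sort lexle [:: nth (0, 0) b k; nth (0, 0) b l; nth (0, 0) b m].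
Proof.
move=> klm /allP lt5; rewrite set_code3; last first.
  rewrite -[[:: _; _; _]]/(map (block_vertex b \o v) [:: k; l; m]).
  rewrite map_inj_in_uniq // => x y /lt5 x5 /lt5 y5 /block_vertex_inj /(congr1 (@nat_of_ord 5)).
  by rewrite /v !inordK.
rewrite !pt_of_block_vertex /v !inordK //.
all: by apply: lt5; rewrite !inE eqxx ?orbT.
Qed.

Lemma mem_block_edges T : (T \in (block_of b).2) = (set_code T \in block_edge_codes b).
Proof.
by rewrite K4e_block_edges !inE -!(inj_eq (@set_code_inj n g)) !set_code_block_edge // -!orbA.
Qed.

Lemma block_edges_transversal e : e \in (block_of b).2 -> transversal_to (grid_groups n g) e.
Proof.
have fstE k : k < 5 -> val (block_vertex b (v k)).1 = (nth (0, 0) b k).1.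
  by move=> k5; rewrite -[LHS]/(pt_of _).1 pt_of_block_vertex /v inordK.
apply: K4e_block_transversal; rewrite -(map_inj_uniq val_inj) !map_cons !fstE //.
all: by case: b b_ok => [|p0 [|p1 [|p2 [|p3 [|p4 []]]]]] // /and4P[].
Qed.
End Block.

Definition GDD_certificate (blocks : seq (seq pt)) : bool :=
  all block_ok blocks &&
  (sort lexle_seq (flatten (map block_edge_codes blocks)) == transversal_codes n g).

Theorem GDD_of_certificate blocks : GDD_certificate blocks ->
  is_GDD_K4e g n (grid_groups n g) (map block_of blocks).
Proof.
case/andP=> /allP blocks_ok /eqP sorted_edges.
have edges_perm : perm_eq (flatten (map block_edge_codes blocks)) (transversal_codes n g).
  by rewrite -sorted_edges perm_sym perm_sort.
split; first split.
- by rewrite card_prod !card_ord mulnC.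
- exact: partition_grid_groups.
- exact: card_grid_groups.
- by move=> _ /imsetP[i _ ->]; apply: card_grid_group.
split.
- by move=> _ /mapP[b /blocks_ok b_ok ->]; apply/K4e_block_iso/block_vertex_inj.
- by move=> _ e /mapP[b /blocks_ok b_ok ->]; apply: block_edges_transversal.
move=> T cardT trT; rewrite count_map.
rewrite (eq_in_count (a2 := fun b => set_code T \in block_edge_codes b)); last first.
  by move=> b /blocks_ok b_ok; rewrite /= mem_block_edges.
rewrite count_mem_flatten ?(perm_uniq edges_perm) ?transversal_codes_uniq //.
by rewrite (permP edges_perm) count_uniq_mem ?transversal_codes_uniq // set_code_transversal.
Qed.
End Certificate.

Lemma GDD_K4e_exists_of_certificate n g (blocks : seq (seq pt)) (n_gt0 : 0 < n) (g_gt0 : 0 < g) :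
  GDD_certificate n g blocks -> GDD_K4e_exists g n.
Proof.
move=> cert; exists ('I_n * 'I_g)%type, (grid_groups n g), (map (block_of n_gt0 g_gt0) blocks).
exact: GDD_of_certificate cert.
Qed.

Definition translate (m g a s : nat) (p : pt) : pt :=
  (if p.1 < m then (p.1 + a) %% m else p.1, (p.2 + s) %% g).

Definition develop (m g : nat) (base : seq (seq pt)) : seq (seq pt) :=
  flatten [seq [seq map (translate m g a s) b | a <- iota 0 m, s <- iota 0 g] | b <- base].

Definition base_5_4 : seq (seq pt) :=
  [:: [:: (0,0); (1,0); (3,2); (2,2); (0,2)];
      [:: (0,0); (1,1); (2,4); (3,3); (0,3)];
      [:: (0,0); (2,0); (1,3); (3,2); (0,2)];
      [:: (0,0); (2,2); (1,4); (3,3); (2,4)];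
      [:: (0,0); (3,1); (2,0); (1,4); (3,0)]].

Definition base_5_6 : seq (seq pt) :=
  [:: [:: (0,0); (1,0); (4,3); (3,2); (1,4)];
      [:: (0,0); (1,0); (5,2); (2,3); (3,3)];
      [:: (0,0); (1,2); (2,3); (4,1); (1,1)];
      [:: (0,0); (1,2); (3,1); (5,4); (2,4)];
      [:: (0,0); (1,3); (3,0); (2,4); (5,2)];
      [:: (0,0); (1,4); (4,2); (5,3); (2,4)];
      [:: (0,0); (1,4); (5,1); (4,4); (3,1)];
      [:: (0,0); (2,1); (1,0); (4,0); (5,0)];
      [:: (0,0); (2,1); (3,4); (4,1); (0,3)];
      [:: (0,0); (2,1); (5,1); (4,3); (1,1)];
      [:: (0,0); (2,1); (5,2); (3,3); (0,3)];
      [:: (0,0); (2,2); (5,2); (3,1); (0,1)];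
      [:: (0,0); (3,3); (2,4); (4,2); (0,4)];
      [:: (0,0); (3,4); (4,2); (1,0); (5,2)];
      [:: (0,0); (3,4); (5,3); (4,0); (0,3)];
      [:: (0,0); (4,1); (5,0); (1,0); (0,3)];
      [:: (0,0); (4,3); (1,3); (3,3); (2,2)];
      [:: (0,0); (5,1); (4,2); (3,1); (5,2)];
      [:: (0,0); (5,3); (3,2); (2,2); (4,1)];
      [:: (0,0); (5,3); (4,1); (2,0); (5,0)]].

Definition base_10_5 : seq (seq pt) :=
  [:: [:: (0,0); (1,0); (3,1); (4,5); (0,5)];
      [:: (0,0); (1,0); (3,4); (2,6); (0,9)];
      [:: (0,0); (1,0); (3,7); (2,3); (4,4)];
      [:: (0,0); (1,1); (2,6); (4,1); (0,9)];
      [:: (0,0); (1,1); (2,8); (4,9); (0,6)];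
      [:: (0,0); (1,2); (2,5); (3,1); (4,5)];
      [:: (0,0); (1,3); (2,1); (3,4); (4,4)];
      [:: (0,0); (1,3); (2,5); (4,9); (0,9)];
      [:: (0,0); (1,3); (4,6); (3,5); (2,7)];
      [:: (0,0); (1,3); (4,7); (3,1); (2,3)];
      [:: (0,0); (1,4); (2,6); (3,5); (4,2)];
      [:: (0,0); (1,5); (2,1); (4,4); (0,9)];
      [:: (0,0); (1,5); (2,8); (3,5); (4,9)];
      [:: (0,0); (1,5); (2,9); (4,7); (0,8)];
      [:: (0,0); (1,5); (4,8); (3,1); (2,9)];
      [:: (0,0); (1,6); (2,3); (4,3); (0,6)];
      [:: (0,0); (1,6); (4,8); (3,8); (1,8)];
      [:: (0,0); (1,7); (2,4); (3,3); (4,3)];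
      [:: (0,0); (1,7); (3,5); (2,5); (1,8)];
      [:: (0,0); (1,7); (4,5); (3,6); (0,4)];
      [:: (0,0); (1,8); (4,1); (3,7); (1,7)];
      [:: (0,0); (1,9); (3,7); (2,5); (0,8)];
      [:: (0,0); (1,9); (4,5); (3,0); (0,3)];
      [:: (0,0); (2,0); (3,1); (1,7); (0,4)];
      [:: (0,0); (2,2); (3,7); (4,9); (2,5)];
      [:: (0,0); (2,3); (1,8); (4,2); (3,1)];
      [:: (0,0); (2,3); (4,7); (1,9); (3,5)];
      [:: (0,0); (2,5); (1,8); (3,6); (4,5)];
      [:: (0,0); (2,6); (1,6); (3,0); (4,5)];
      [:: (0,0); (2,7); (4,8); (3,7); (0,6)];
      [:: (0,0); (2,8); (1,4); (3,6); (4,9)];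
      [:: (0,0); (3,0); (2,4); (4,1); (0,7)];
      [:: (0,0); (3,2); (2,0); (4,2); (0,4)];
      [:: (0,0); (3,3); (4,3); (1,5); (0,1)];
      [:: (0,0); (3,4); (1,1); (4,6); (0,6)];
      [:: (0,0); (3,9); (1,8); (4,8); (0,6)];
      [:: (0,0); (4,0); (3,9); (1,0); (0,6)];
      [:: (0,0); (4,1); (3,3); (1,3); (0,1)];
      [:: (0,0); (4,4); (1,6); (2,5); (0,6)];
      [:: (0,0); (4,5); (2,7); (1,1); (0,7)]].

Theorem lemma3p3 (g n : nat) :
  (g, n) \in [:: (5, 4); (5, 6); (10, 5)] -> GDD_K4e_exists g n.
Proof.
rewrite !inE => /or3P[] /eqP [-> ->].
- by apply: (@GDD_K4e_exists_of_certificate 4 5 (develop 4 5 base_5_4)) => //; vm_compute.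
- by apply: (@GDD_K4e_exists_of_certificate 6 5 (develop 5 5 base_5_6)) => //; vm_compute.
- by apply: (@GDD_K4e_exists_of_certificate 5 10 (develop 5 10 base_10_5)) => //; vm_compute.
Qed.
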